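(* Let $\Omega$ be a metric space and $\tau$ a two-valued measurable cardinal with $|\Omega|\ge\tau$. Then there exist $r>0$ and a subset $Y\subseteq\Omega$ of cardinality $\tau$ such that the metric of $\Omega$ restricted to $Y$ takes only the values $0$ and $r$ (i.e. $d(x,y)=r$ for all distinct $x,y\in Y$).
   Context: A cardinal $\tau$ is two-valued measurable (measurable) if there is a probability measure defined on all subsets of $\tau$, taking only the values $0$ and $1$, vanishing on singletons, whose ideal of null sets is closed under unions of fewer than $\tau$ members. *)

From Stdlib Require Import Reals.
Open Scope R_scope.

Definition is_metric {X : Type} (d : X -> X -> R) : Prop :=
  (forall x y, 0 <= d x y) /\
  (forall x y, d x y = 0 <-> x = y) /\
  (forall x y, d x y = d y x) /\
  (forall x y z, d x z <= d x y + d y z).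

Definition card_le (A B : Type) : Prop :=
  exists f : A -> B, forall x y, f x = f y -> x = y.
Definition card_lt (A B : Type) : Prop := card_le A B /\ ~ card_le B A.

Definition is_prob_measure_all {T : Type} (mu : (T -> Prop) -> R) : Prop :=
  mu (fun _ => True) = 1 /\
  (forall A, 0 <= mu A) /\
  (forall A : nat -> T -> Prop,
      (forall i j x, i <> j -> A i x -> A j x -> False) ->
      infinite_sum (fun n => mu (A n)) (mu (fun x => exists n, A n x))).

(* The cardinal tau = |T| is two-valued measurable: there is a probability
   measure on all subsets of T, taking only the values 0 and 1, vanishing on
   singletons, whose null ideal is closed under unions of fewer than |T|
   members. *)
Definition two_valued_measurable (T : Type) : Prop :=
  exists mu : (T -> Prop) -> R,
    is_prob_measure_all mu /\
    (forall A, mu A = 0 \/ mu A = 1) /\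
    (forall t : T, mu (fun x => x = t) = 0) /\
    (forall (I : Type) (A : I -> T -> Prop),
        card_lt I T ->
        (forall i, mu (A i) = 0) ->
        mu (fun x => exists i, A i x) = 0).

(* Pull the metric back to T along the injection T -> Omega.  Countable
   completeness of the two-valued measure makes every real function a.e.
   constant: for each s, d(s, t) = g(s) for almost every t, and g(s) = r for
   almost every s; call such s typical.  Since singletons are null, r > 0.  By
   Zorn there is a maximal set S of typical points at mutual distance r, and
   |S| = |T|: otherwise the fewer than |T| null sets {t | d(x, t) <> r or t = x},
   x in S, together with the atypical points, have null union, so some typical
   point could be added to S. *)

From Stdlib Require Import Reals Classical ClassicalEpsilon FunctionalExtensionality
  PropExtensionality Lra Lia.
From mathcomp Require classical_sets.
Open Scope R_scope.

Lemma infinite_sum_finite_support (s : nat -> R) (N : nat) (l : R) :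
  (forall n, (N < n)%nat -> s n = 0) -> infinite_sum s l -> l = sum_f_R0 s N.
Proof.
intros s_zero s_l. apply (uniqueness_sum s); [exact s_l |].
intros eps eps_pos. exists N. intros n n_ge.
replace (sum_f_R0 s n) with (sum_f_R0 s N).
- unfold R_dist. rewrite Rminus_diag, Rabs_R0. exact eps_pos.
- induction n_ge as [| n n_ge IH]; [reflexivity |].
  simpl. rewrite <- IH, (s_zero (S n)) by lia. ring.
Qed.

Lemma infinite_sum_const_self (c : R) : infinite_sum (fun _ => c) c -> c = 0.
Proof.
intros c_sum. apply NNPP. intros c_neq0.
destruct (c_sum (Rabs c)) as [N HN]; [now apply Rabs_pos_lt |].
specialize (HN (S N) ltac:(lia)). unfold R_dist in HN.
rewrite sum_cte, S_INR, S_INR in HN.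
replace (c * (INR N + 1 + 1) - c) with (c * (INR N + 1)) in HN by ring.
rewrite Rabs_mult, (Rabs_right (INR N + 1)) in HN by (pose proof (pos_INR N); lra).
pose proof (pos_INR N). pose proof (Rabs_pos_lt c c_neq0). nra.
Qed.

Lemma exists_least_nat (P : nat -> Prop) :
  (exists n, P n) -> exists n, P n /\ forall k, (k < n)%nat -> ~ P k.
Proof.
intros [n Pn]. induction n as [n IH] using (well_founded_induction Wf_nat.lt_wf).
destruct (classic (exists k, (k < n)%nat /\ P k)) as [[k [k_lt Pk]] | no_smaller].
- exact (IH k k_lt Pk).
- exists n. split; [exact Pn |]. intros k k_lt Pk. apply no_smaller. now exists k.
Qed.

Lemma measure_ext {T : Type} (mu : (T -> Prop) -> R) (A B : T -> Prop) :
  (forall x, A x <-> B x) -> mu A = mu B.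
Proof.
intros AB. f_equal. apply functional_extensionality. intros x.
apply propositional_extensionality, AB.
Qed.

Section ProbabilityMeasure.

Variables (T : Type) (mu : (T -> Prop) -> R).
Hypothesis mu_prob : is_prob_measure_all mu.

Lemma measure_ge0 (A : T -> Prop) : 0 <= mu A.
Proof. apply mu_prob. Qed.

Lemma measure_sigma_additive (A : nat -> T -> Prop) :
  (forall i j x, i <> j -> A i x -> A j x -> False) ->
  infinite_sum (fun n => mu (A n)) (mu (fun x => exists n, A n x)).
Proof. apply mu_prob. Qed.

Lemma measure_empty : mu (fun _ => False) = 0.
Proof.
apply infinite_sum_const_self.
pose proof (measure_sigma_additive (fun _ _ => False)) as empty_sum; cbv beta in empty_sum.
rewrite (measure_ext mu (fun x => exists n : nat, False) (fun _ => False)) in empty_sum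
  by (intros x; split; [intros [_ []] | intros []]).
apply empty_sum. tauto.
Qed.

Lemma measure_disjoint_union (A B : T -> Prop) :
  (forall x, A x -> B x -> False) -> mu (fun x => A x \/ B x) = mu A + mu B.
Proof.
intros AB_disj.
set (F := fun n : nat => match n with 0%nat => A | 1%nat => B | _ => fun _ => False end).
rewrite (measure_ext mu _ (fun x => exists n, F n x)).
- apply (infinite_sum_finite_support (fun n => mu (F n)) 1).
  + intros [| [| n]] n_gt; [lia | lia | apply measure_empty].
  + apply measure_sigma_additive.
    intros [| [| i]] [| [| j]] x; simpl; intros; eauto.
- intros x; split.
  + intros [Ax | Bx]; [exists 0%nat | exists 1%nat]; assumption.
  + intros [[| [| n]] Fx]; simpl in Fx; tauto.
Qed.

Lemma measure_setC (A : T -> Prop) : mu A + mu (fun x => ~ A x) = 1.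
Proof.
rewrite <- measure_disjoint_union by tauto.
rewrite <- (proj1 mu_prob). apply measure_ext.
intros x. split; [tauto | intros _; apply classic].
Qed.

Lemma full_iff_null_setC (A : T -> Prop) : mu A = 1 <-> mu (fun x => ~ A x) = 0.
Proof. pose proof (measure_setC A). split; intros; lra. Qed.

Lemma null_setC_full (A : T -> Prop) : mu A = 0 -> mu (fun x => ~ A x) = 1.
Proof. pose proof (measure_setC A). lra. Qed.

Lemma measure_le (A B : T -> Prop) : (forall x, A x -> B x) -> mu A <= mu B.
Proof.
intros AB.
rewrite (measure_ext mu B (fun x => A x \/ (B x /\ ~ A x))).
- rewrite measure_disjoint_union by tauto.
  pose proof (measure_ge0 (fun x => B x /\ ~ A x)). lra.
- intros x. destruct (classic (A x)); intuition.
Qed.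

Lemma null_sub (A B : T -> Prop) : (forall x, B x -> A x) -> mu A = 0 -> mu B = 0.
Proof.
intros BA A_null. pose proof (measure_le B A BA). pose proof (measure_ge0 B). lra.
Qed.

Lemma full_sub (A B : T -> Prop) : (forall x, A x -> B x) -> mu A = 1 -> mu B = 1.
Proof.
intros AB A_full. rewrite full_iff_null_setC in *.
apply (null_sub _ _ (fun x nBx Ax => nBx (AB x Ax)) A_full).
Qed.

(* Disjointify: [B n] keeps the points whose first index is [n]. *)
Lemma null_countable_union (A : nat -> T -> Prop) :
  (forall n, mu (A n) = 0) -> mu (fun x => exists n, A n x) = 0.
Proof.
intros A_null.
set (B := fun n x => A n x /\ forall k, (k < n)%nat -> ~ A k x).
assert (B_null : forall n, mu (B n) = 0)
  by (intros n; apply (null_sub (A n)); [intros x [Ax _]; exact Ax | apply A_null]).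
rewrite (measure_ext mu _ (fun x => exists n, B n x)).
- rewrite (infinite_sum_finite_support (fun n => mu (B n)) 0 _ (fun n _ => B_null n)).
  + apply B_null.
  + apply measure_sigma_additive. intros i j x i_neq [Ai Bi] [Aj Bj].
    destruct (Nat.lt_total i j) as [ij | [ij | ij]];
      [exact (Bj i ij Ai) | contradiction | exact (Bi j ij Aj)].
- intros x. split; [apply exists_least_nat | intros [n [Ax _]]; now exists n].
Qed.

Lemma null_union (A B : T -> Prop) :
  mu A = 0 -> mu B = 0 -> mu (fun x => A x \/ B x) = 0.
Proof.
intros A_null B_null.
rewrite (measure_ext mu _ (fun x => exists n : nat, match n with 0%nat => A x | _ => B x end)).
- apply null_countable_union. intros [| n]; assumption.
- intros x. split.
  + intros [Ax | Bx]; [exists 0%nat | exists 1%nat]; assumption.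
  + intros [[| n] Hx]; tauto.
Qed.

Lemma full_nonempty (A : T -> Prop) : mu A = 1 -> exists x, A x.
Proof.
intros A_full. apply NNPP. intros A_empty.
rewrite (measure_ext mu A (fun _ => False)), measure_empty in A_full
  by (intros x; split; [intros Ax; apply A_empty; now exists x | intros []]).
lra.
Qed.

Lemma ae_eq_threshold (h : T -> R) (r : R) :
  (forall x, r < x -> mu (fun t => h t <= x) = 1) ->
  (forall x, x < r -> mu (fun t => h t <= x) = 0) ->
  mu (fun t => h t <> r) = 0.
Proof.
intros above below.
assert (inv_pos : forall n, 0 < / INR (S n))
  by (intros n; apply Rinv_0_lt_compat, lt_0_INR; lia).
apply (null_sub (fun t => (exists n, ~ h t <= r + / INR (S n)) \/
                          (exists n, h t <= r - / INR (S n)))).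
- intros t ht_neq.
  destruct (archimed_cor1 (Rabs (h t - r))) as [[| n] [n_small n_pos]];
    [now apply Rabs_pos_lt, Rminus_eq_contra | lia |].
  destruct (Rle_or_lt (h t) r) as [ht_le | ht_gt].
  + right. exists n. rewrite Rabs_left1 in n_small by lra. lra.
  + left. exists n. rewrite Rabs_right in n_small by lra. lra.
- apply null_union; apply null_countable_union; intros n; specialize (inv_pos n).
  + apply (full_iff_null_setC (fun t => h t <= _)), above. lra.
  + apply below. lra.
Qed.

Hypothesis mu_two_valued : forall A, mu A = 0 \/ mu A = 1.

Lemma cover_full_member (A : nat -> T -> Prop) :
  (forall t, exists n, A n t) -> exists n, mu (A n) = 1.
Proof.
intros A_cover. apply NNPP. intros no_full.
assert (union_null : mu (fun t => exists n, A n t) = 0).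
{ apply null_countable_union. intros n.
  destruct (mu_two_valued (A n)) as [A_null | A_full]; [exact A_null |].
  contradict no_full. now exists n. }
rewrite (measure_ext mu _ (fun _ => True)), (proj1 mu_prob) in union_null
  by (intros t; split; auto).
lra.
Qed.

(* The a.e. value is the supremum of the levels whose sublevel set is not full. *)
Lemma ae_const (h : T -> R) : exists r, mu (fun t => h t = r) = 1.
Proof.
set (full_below := fun x => mu (fun t => h t <= x) = 1).
assert (full_below_mono : forall x y, x <= y -> full_below x -> full_below y)
  by (intros x y xy; apply full_sub; intros t; lra).
assert (full_below_nat : exists n, full_below (INR n)).
{ apply cover_full_member. intros t.
  destruct (INR_unbounded (h t)) as [n hn]. exists n. lra. }
assert (not_full_below_nat : exists n, ~ full_below (- INR n)).
{ destruct (cover_full_member (fun n t => ~ h t <= - INR n)) as [n n_full].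
  - intros t. destruct (INR_unbounded (- h t)) as [n hn]. exists n. lra.
  - exists n. unfold full_below.
    pose proof (measure_setC (fun t => h t <= - INR n)). lra. }
destruct full_below_nat as [n1 n1_full], not_full_below_nat as [n2 n2_not_full].
destruct (completeness (fun x => ~ full_below x)) as [r [r_ub r_lub]].
- exists (INR n1). intros x x_not_full. apply Rnot_lt_le. intros x_gt.
  apply x_not_full, (full_below_mono (INR n1)); [lra | exact n1_full].
- now exists (- INR n2).
- exists r. apply full_iff_null_setC, ae_eq_threshold.
  + intros x x_gt. apply NNPP. intros x_not_full. specialize (r_ub x x_not_full). lra.
  + intros x x_lt. destruct (mu_two_valued (fun t => h t <= x)) as [x_null | x_full];
      [exact x_null | exfalso].
    assert (r <= x); [| lra]. apply r_lub. intros y y_not_full.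
    apply Rnot_lt_le. intros y_gt. apply y_not_full, (full_below_mono x); [lra | exact x_full].
Qed.

End ProbabilityMeasure.

Lemma Zorn_sets (T : Type) (P : (T -> Prop) -> Prop) :
  (forall F : (T -> Prop) -> Prop, (forall X, F X -> P X) ->
    (forall X Y, F X -> F Y -> (forall t, X t -> Y t) \/ (forall t, Y t -> X t)) ->
    P (fun t => exists2 X, F X & X t)) ->
  exists A, P A /\
    forall B, (forall t, A t -> B t) -> ~ (forall t, B t -> A t) -> ~ P B.
Proof.
intros chain_ub.
destruct (classical_sets.Zorn_bigcup chain_ub) as [A [PA A_max]].
exists A. split; [exact PA |]. intros B AB not_BA. apply A_max. now split.
Qed.

Lemma proj1_sig_inj {A : Type} {P : A -> Prop} (u v : {x | P x}) :
  proj1_sig u = proj1_sig v -> u = v.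
Proof. apply eq_sig_hprop. intros x p q. apply proof_irrelevance. Qed.

Section EquilateralSubset.

Variables (T : Type) (mu : (T -> Prop) -> R) (D : T -> T -> R).
Hypothesis mu_prob : is_prob_measure_all mu.
Hypothesis mu_two_valued : forall A, mu A = 0 \/ mu A = 1.
Hypothesis mu_singleton : forall t : T, mu (fun x => x = t) = 0.
Hypothesis mu_small_union : forall (I : Type) (A : I -> T -> Prop),
  card_lt I T -> (forall i, mu (A i) = 0) -> mu (fun x => exists i, A i x) = 0.
Hypothesis D_sym : forall s t, D s t = D t s.
Hypothesis D_pos : forall s t, s <> t -> 0 < D s t.

Definition typical (r : R) (s : T) : Prop := mu (fun t => D s t = r) = 1.

Definition equilateral (r : R) (S : T -> Prop) : Prop :=
  forall x y, S x -> S y -> x <> y -> D x y = r.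

Lemma typical_distance : exists r, mu (typical r) = 1.
Proof.
destruct (choice (fun s r => typical r s)) as [g g_typical].
- intros s. exact (ae_const T mu mu_prob mu_two_valued (D s)).
- destruct (ae_const T mu mu_prob mu_two_valued g) as [r r_full].
  exists r. apply (full_sub T mu mu_prob (fun s => g s = r)); [| exact r_full].
  intros s gs. rewrite <- gs. apply g_typical.
Qed.

Variable r : R.
Hypothesis r_typical : mu (typical r) = 1.

Lemma typical_off_distance_null (s : T) :
  typical r s -> mu (fun t => D s t <> r \/ t = s) = 0.
Proof.
intros s_typical. apply (null_union T mu mu_prob); [| apply mu_singleton].
apply (full_iff_null_setC T mu mu_prob (fun t => D s t = r)), s_typical.
Qed.

Lemma typical_distance_pos : 0 < r.
Proof.
destruct (full_nonempty T mu mu_prob _ r_typical) as [s s_typical].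
assert (far_full : mu (fun t => ~ (D s t <> r \/ t = s)) = 1)
  by apply (null_setC_full T mu mu_prob), typical_off_distance_null, s_typical.
destruct (full_nonempty T mu mu_prob _ far_full) as [t st].
assert (t <> s) by tauto. assert (D s t = r) by (apply NNPP; tauto).
subst r. apply D_pos. auto.
Qed.

Lemma equilateral_extend (S : T -> Prop) :
  (forall x, S x -> typical r x) -> card_lt {x | S x} T ->
  exists t, typical r t /\ forall x, S x -> D x t = r /\ x <> t.
Proof.
intros S_typical S_small.
set (bad := fun (i : {x | S x}) t => D (proj1_sig i) t <> r \/ t = proj1_sig i).
assert (bad_null : mu (fun t => (exists i, bad i t) \/ ~ typical r t) = 0).
{ apply (null_union T mu mu_prob).
  - apply mu_small_union; [exact S_small |].
    intros [x Sx]. apply typical_off_distance_null, S_typical, Sx.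
  - apply (full_iff_null_setC T mu mu_prob), r_typical. }
apply (null_setC_full T mu mu_prob) in bad_null.
destruct (full_nonempty T mu mu_prob _ bad_null) as [t t_good].
exists t. split.
- apply NNPP. tauto.
- intros x Sx. assert (t_good_x : ~ bad (exist _ x Sx) t) by eauto.
  unfold bad in t_good_x; simpl in t_good_x.
  split; [apply NNPP |]; intuition.
Qed.

Lemma large_equilateral_subset : exists S, equilateral r S /\ card_le T {x | S x}.
Proof.
destruct (Zorn_sets T (fun S => (forall x, S x -> typical r x) /\ equilateral r S))
  as [S [[S_typical S_equi] S_max]].
- intros F F_good F_chain. split.
  + intros x [X FX Xx]. exact (proj1 (F_good X FX) x Xx).
  + intros x y [X FX Xx] [Y FY Yy] xy.
    destruct (F_chain X Y FX FY) as [XY | YX].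
    * exact (proj2 (F_good Y FY) x y (XY x Xx) Yy xy).
    * exact (proj2 (F_good X FX) x y Xx (YX y Yy) xy).
- exists S. split; [exact S_equi |]. apply NNPP. intros S_not_large.
  assert (S_small : card_lt {x | S x} T)
    by (split; [exists (@proj1_sig T S); apply proj1_sig_inj | exact S_not_large]).
  destruct (equilateral_extend S S_typical S_small) as [t [t_typical t_far]].
  apply (S_max (fun x => S x \/ x = t)).
  + intros x Sx. now left.
  + intros sub. exact (proj2 (t_far t (sub t (or_intror eq_refl))) eq_refl).
  + split.
    * intros x [Sx | ->]; [exact (S_typical x Sx) | exact t_typical].
    * intros x y [Sx | ->] [Sy | ->] xy.
      -- exact (S_equi x y Sx Sy xy).
      -- exact (proj1 (t_far x Sx)).
      -- rewrite D_sym. exact (proj1 (t_far y Sy)).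
      -- contradiction.
Qed.

End EquilateralSubset.

Lemma two_valued_measurable_equilateral (T : Type) (D : T -> T -> R) :
  two_valued_measurable T ->
  (forall s t, D s t = D t s) -> (forall s t, s <> t -> 0 < D s t) ->
  exists r S, 0 < r /\ equilateral T D r S /\ card_le T {x | S x}.
Proof.
intros [mu [mu_prob [mu_two_valued [mu_singleton mu_small_union]]]] D_sym D_pos.
destruct (typical_distance T mu D mu_prob mu_two_valued) as [r r_typical].
destruct (large_equilateral_subset T mu D mu_prob mu_singleton mu_small_union D_sym r r_typical)
  as [S [S_equi S_large]].
exists r, S. split; [| now split].
exact (typical_distance_pos T mu D mu_prob mu_singleton D_pos r r_typical).
Qed.

Theorem mainTheorem8 (Omega : Type) (d : Omega -> Omega -> R) (T : Type)
  (hd : is_metric d) (htau : two_valued_measurable T)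
  (hcard : card_le T Omega) :
  exists (r : R) (Y : Omega -> Prop),
    0 < r /\
    (exists f : T -> Omega,
        (forall s t, f s = f t -> s = t) /\
        (forall y, Y y <-> exists t, f t = y)) /\
    (forall x y, Y x -> Y y -> x <> y -> d x y = r).
Proof.
destruct hcard as [f f_inj], hd as [d_ge0 [d_eq0 [d_sym _]]].
destruct (two_valued_measurable_equilateral T (fun s t => d (f s) (f t)) htau)
  as [r [S [r_pos [S_equi [g g_inj]]]]].
- intros s t. apply d_sym.
- intros s t st. destruct (Rle_lt_or_eq_dec _ _ (d_ge0 (f s) (f t))) as [lt | eq0]; [exact lt |].
  contradict st. apply f_inj, d_eq0. now symmetry.
- set (e := fun a => f (proj1_sig (g a))).
  exists r, (fun y => exists a, e a = y). split; [exact r_pos | split].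
  + exists e. split; [| tauto].
    intros a b eab. apply g_inj, proj1_sig_inj, f_inj, eab.
  + intros x y [a <-] [b <-] xy. apply S_equi; try apply proj2_sig.
    intros gab. apply xy. unfold e. now rewrite gab.
Qed.
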